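(* Let $q$ be a prime power and let $\Gamma$ be a projective bundle in $\mathrm{PG}(2,q)$. Then every line $\ell$ of $\mathrm{PG}(2,q)$ has exactly $q+1$ tangent ovals in $\Gamma$, exactly one through each point of $\ell$. Moreover: if $q$ is even, all the $q+1$ tangent ovals of $\ell$ pass through a common point; if $q$ is odd, every point not on $\ell$ lies on either zero or exactly two of the tangent ovals of $\ell$.
   Context: $\mathrm{PG}(2,q)$ is the projective plane whose points and lines are the 1- and 2-dimensional subspaces of $\mathbb{F}_q^3$ (it has $q^2+q+1$ points, each line has $q+1$ points). An oval is a set of $q+1$ points of $\mathrm{PG}(2,q)$ such that every line meets it in at most two points. A projective bundle is a collection of $q^2+q+1$ ovals of $\mathrm{PG}(2,q)$ any two of which intersect in exactly one point. An oval of $\Gamma$ is tangent to a line $\ell$ if it meets $\ell$ in exactly one point. *)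

From HB Require Import structures.
From mathcomp Require Import all_boot all_order all_algebra all_field.
Set Implicit Arguments. Unset Strict Implicit. Unset Printing Implicit Defensive.
Import GRing.Theory.

(* PG(2,q) over a finite field F (q = #|F|): subspaces of F^3 are represented
   by their canonical generating matrices <<A>>%MS in 'M[F]_3 (row spaces). *)

Definition pg_points (F : finFieldType) : {set 'M[F]_3} :=
  [set A : 'M[F]_3 | (\rank A == 1%N) && (<<A>>%MS == A)].

Definition pg_lines (F : finFieldType) : {set 'M[F]_3} :=
  [set A : 'M[F]_3 | (\rank A == 2%N) && (<<A>>%MS == A)].

Definition on_line (F : finFieldType) (S : {set 'M[F]_3}) (L : 'M[F]_3)
  : {set 'M[F]_3} := [set P in S | (P <= L)%MS].

Definition is_oval (F : finFieldType) (O : {set 'M[F]_3}) : bool :=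
  [&& O \subset pg_points F, #|O| == #|F|.+1 &
      [forall L in pg_lines F, #|on_line O L| <= 2]].

Definition is_projective_bundle (F : finFieldType) (G : {set {set 'M[F]_3}}) : bool :=
  [&& [forall O in G, is_oval O], #|G| == (#|F| ^ 2 + #|F| + 1)%N &
      [forall O1 in G, forall O2 in G, (O1 != O2) ==> (#|O1 :&: O2| == 1%N)]].

Definition tangent (F : finFieldType) (O : {set 'M[F]_3}) (L : 'M[F]_3) : bool :=
  #|on_line O L| == 1%N.

Definition tangent_ovals (F : finFieldType) (G : {set {set 'M[F]_3}}) (L : 'M[F]_3)
  : {set {set 'M[F]_3}} := [set O in G | tangent O L].

From mathcomp Require Import all_boot all_order all_algebra all_field.
From mathcomp Require Import mxabelem zify.
Set Implicit Arguments. Unset Strict Implicit. Unset Printing Implicit Defensive.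

(* The ovals of a projective bundle are the lines of a second projective
   plane on the points of PG(2,q): double counting shows that every point lies
   on q + 1 ovals and any two points on exactly one.  Given a line l, the q
   other points of l are joined to a point x of l by q distinct ovals, all
   secant to l, so exactly one of the q + 1 ovals through x is tangent to l.
   A point y off l is joined to the q + 1 points of l by ovals through y
   meeting l in one or two points, so the number t_y of tangents through y
   has the parity of q + 1.  Two tangents meet in exactly one point, which is
   off l, so over the q^2 points off l we get sum t_y = q(q + 1) and
   sum t_y^2 = 2q(q + 1).  For q odd every t_y is even and
   sum t_y (t_y - 2) = 0 forces t_y in {0, 2}; for q even, u_y = t_y - 1
   satisfies sum u_y = q and sum u_y^2 = q^2, so some u_y equals q and that
   point lies on all q + 1 tangents. *)

Lemma sum_nat_boolE (T : finType) (A : {pred T}) (p : pred T) :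
  \sum_(x in A) (p x : nat) = #|[set x in A | p x]|.
Proof.
by rewrite -sum1dep_card big_mkcondr; apply: eq_bigr => x _; case: (p x).
Qed.

Lemma eq_of_leq_sum (I : finType) (A : {pred I}) (E1 E2 : I -> nat) :
  (forall i, i \in A -> E1 i <= E2 i) ->
  \sum_(i in A) E1 i = \sum_(i in A) E2 i -> forall i, i \in A -> E1 i = E2 i.
Proof.
move=> le12 eq12 i Ai.
have /esym := (leqif_sum (fun j (Aj : j \in A) => leqif_eq (le12 j Aj))).2.
by rewrite eq12 eqxx => /forall_inP/(_ i Ai)/eqP.
Qed.

Lemma sum_sqr_eq_sqr_sum (I : finType) (A : {pred I}) (u : I -> nat) :
  \sum_(i in A) u i ^ 2 = (\sum_(i in A) u i) ^ 2 ->
  forall i, i \in A -> u i \in [:: 0; \sum_(j in A) u j].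
Proof.
set S := \sum_(j in A) u j => sum_sqr i Ai.
have le_uS j : j \in A -> u j <= S by move=> Aj; rewrite /S (bigD1 j) ?leq_addr.
have sqr_ui : u i ^ 2 = S * u i.
  apply: (@eq_of_leq_sum _ A (fun j => u j ^ 2) (fun j => S * u j)) => // [j Aj|].
    by rewrite -mulnn leq_mul2r le_uS ?orbT.
  by rewrite -big_distrr sum_sqr.
have [-> //|ui_gt0] := posnP (u i).
move/eqP: sqr_ui; rewrite -mulnn eqn_pmul2r // => /eqP->.
by rewrite !inE eqxx orbT.
Qed.

Lemma sum_double_even (I : finType) (A : {pred I}) (t : I -> nat) :
  (forall i, i \in A -> ~~ odd (t i)) ->
  \sum_(i in A) 2 * t i = \sum_(i in A) t i ^ 2 ->
  forall i, i \in A -> t i \in [:: 0; 2].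
Proof.
move=> even_t sum_eq i Ai.
have le_dbl_sqr j : j \in A -> 2 * t j <= t j ^ 2.
  move=> Aj; have := even_t j Aj.
  by case: (t j) => [|[|n]] //= _; rewrite -mulnn leq_mul2r.
have := eq_of_leq_sum le_dbl_sqr sum_eq Ai.
have [-> //|ti_gt0] := posnP (t i).
by rewrite -mulnn => /eqP; rewrite eqn_pmul2r // => /eqP<-.
Qed.

Definition blocks_through (T : finType) (B : {set {set T}}) (x : T) : {set {set T}} :=
  [set O in B | x \in O].

Definition tangent_blocks (T : finType) (B : {set {set T}}) (l : {set T}) :
  {set {set T}} := [set O in B | #|O :&: l| == 1].

Lemma sum_blocks_through_mul (T : finType) (A : {set T}) (B : {set {set T}})
    (f : T -> nat) :
  \sum_(x in A) #|blocks_through B x| * f x = \sum_(O in B) \sum_(x in O :&: A) f x.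
Proof.
rewrite (eq_bigr (fun x => \sum_(O in B | x \in O) f x)); last first.
  by move=> x _; rewrite -sum_nat_const; apply: eq_bigl => O; rewrite inE.
rewrite (exchange_big_dep (mem B)) => [|x O _ /andP[] //].
by apply: eq_bigr => O OB; apply: eq_bigl => x; rewrite !inE (OB : O \in B) andbC.
Qed.

Lemma sum_card_blocks_through (T : finType) (A : {set T}) (B : {set {set T}}) :
  \sum_(x in A) #|blocks_through B x| = \sum_(O in B) #|O :&: A|.
Proof.
under eq_bigr do rewrite -[#|_|]muln1.
by rewrite sum_blocks_through_mul; under eq_bigr do rewrite sum1_card.
Qed.

Section BlockDesign.
Variables (T : finType) (pts : {set T}) (B : {set {set T}}) (q : nat).
Hypothesis q_gt0 : 0 < q.
Hypothesis card_pts : #|pts| = (q ^ 2 + q + 1)%N.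
Hypothesis card_B : #|B| = (q ^ 2 + q + 1)%N.
Hypothesis block_sub : forall O, O \in B -> O \subset pts.
Hypothesis card_block : forall O, O \in B -> #|O| = q.+1.
Hypothesis card_blockI :
  forall O O', O \in B -> O' \in B -> O != O' -> #|O :&: O'| = 1.

Lemma card_pts_setD1 x : x \in pts -> #|pts :\ x| = q.+1 * q.
Proof. by move=> x_pt; move: (cardsD1 x pts); rewrite x_pt card_pts; lia. Qed.

Lemma card_blocks_through2_le1 x y :
  x != y -> #|blocks_through (blocks_through B x) y| <= 1.
Proof.
move=> neq_xy; rewrite leqNgt; apply/negP => /card_gt1P[O [O' []]].
rewrite !inE => /andP[/andP[OB xO] yO] /andP[/andP[O'B xO'] yO'] neqOO'.
have : [set x; y] \subset O :&: O'.
  by apply/subsetP => z; rewrite !inE => /orP[]/eqP->; apply/andP.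
by move/subset_leq_card; rewrite card_blockI // cards2 neq_xy.
Qed.

Lemma sum_card_blocks_through2 x : x \in pts ->
  \sum_(y in pts :\ x) #|blocks_through (blocks_through B x) y|
    = #|blocks_through B x| * q.
Proof.
move=> x_pt; rewrite sum_card_blocks_through -sum_nat_const.
apply: eq_bigr => O; rewrite inE => /andP[OB xO].
rewrite setIDA (setIidPl (block_sub OB)); move: (cardsD1 x O).
by rewrite xO card_block // add1n => -[].
Qed.

Lemma card_blocks_through x : x \in pts -> #|blocks_through B x| = q.+1.
Proof.
have r_le y : y \in pts -> #|blocks_through B y| <= q.+1.
  move=> y_pt; rewrite -(leq_pmul2r q_gt0) -sum_card_blocks_through2 //.
  rewrite -(card_pts_setD1 y_pt) -sum1_card leq_sum // => z.
  by rewrite !inE => /andP[neq_zy _]; rewrite card_blocks_through2_le1 // eq_sym.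
apply: (eq_of_leq_sum r_le); rewrite sum_card_blocks_through sum_nat_const card_pts.
rewrite (eq_bigr (fun=> q.+1)) => [|O OB]; last first.
  by rewrite (setIidPl (block_sub OB)) card_block.
by rewrite sum_nat_const card_B.
Qed.

Lemma card_blocks_through2 x y : x \in pts -> y \in pts -> x != y ->
  #|blocks_through (blocks_through B x) y| = 1.
Proof.
move=> x_pt y_pt neq_xy; have y_in : y \in pts :\ x by rewrite !inE eq_sym neq_xy.
pose r z := #|blocks_through (blocks_through B x) z|.
apply: (eq_of_leq_sum (E1 := r) (E2 := fun=> 1) _ _ y_in) => [z|].
  by rewrite !inE => /andP[neq_zx _]; rewrite card_blocks_through2_le1 // eq_sym.
by rewrite sum_card_blocks_through2 // card_blocks_through // sum1_card card_pts_setD1.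
Qed.

Section TangentBlocks.
Variable l : {set T}.
Hypothesis line_sub : l \subset pts.
Hypothesis card_line : #|l| = q.+1.
Hypothesis card_blockI_line_le2 : forall O, O \in B -> #|O :&: l| <= 2.

Local Notation tan := (tangent_blocks B l).
Local Notation off := (pts :\: l).

Lemma card_tangent_blocks_through x : #|blocks_through tan x| =
  \sum_(O in blocks_through B x) (#|O :&: l| == 1 : nat).
Proof. by rewrite sum_nat_boolE; apply: eq_card => O; rewrite !inE andbAC. Qed.

Lemma card_tangents_through_line x : x \in l -> #|blocks_through tan x| = 1.
Proof.
move=> x_l; have x_pt := subsetP line_sub x x_l.
have split_meet O : O \in blocks_through B x ->
    #|O :&: l| = 1 + #|O :&: (l :\ x)|.
  by rewrite inE setIDA => /andP[_ xO]; rewrite (cardsD1 x) !inE xO x_l.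
have secants : \sum_(O in blocks_through B x) #|O :&: (l :\ x)| = q.
  rewrite -sum_card_blocks_through (eq_bigr (fun=> 1)) => [|y].
    by rewrite sum1_card; move: (cardsD1 x l); rewrite x_l card_line => -[].
  rewrite !inE => /andP[neq_yx y_l]; apply: card_blocks_through2 => //.
  - exact: subsetP line_sub y y_l.
  - by rewrite eq_sym.
have one_or_secant O : O \in blocks_through B x ->
    1 = (#|O :&: l| == 1) + #|O :&: (l :\ x)|.
  move=> Ox; have /andP[OB _] : (O \in B) && (x \in O) by rewrite inE in Ox.
  have := card_blockI_line_le2 OB; rewrite split_meet //.
  by case: #|O :&: (l :\ x)| => [|[|n]].
have := card_blocks_through x_pt; rewrite -sum1_card (eq_bigr _ one_or_secant).
by rewrite big_split /= secants -card_tangent_blocks_through -add1n => /addIn.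
Qed.

Lemma tangent_blocks_sub : tan \subset B.
Proof. by apply/subsetP => O; rewrite inE => /andP[]. Qed.

Lemma card_tangent_blocks : #|tan| = q.+1.
Proof.
rewrite -card_line -sum1_card -[RHS]sum1_card.
rewrite -(eq_bigr _ card_tangents_through_line) sum_card_blocks_through.
by apply: eq_bigr => O; rewrite inE => /andP[_ /eqP].
Qed.

Lemma odd_card_tangents_through_off y :
  y \in off -> odd #|blocks_through tan y| = ~~ odd q.
Proof.
rewrite inE => /andP[y_nl y_pt].
have meets : \sum_(O in blocks_through B y) #|O :&: l| = q.+1.
  rewrite -sum_card_blocks_through -card_line -sum1_card; apply: eq_bigr => x x_l.
  apply: card_blocks_through2 => //; first exact: subsetP line_sub x x_l.
  by apply: contraNneq y_nl => ->.
have tangent_or_secant O : O \in blocks_through B y ->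
    #|O :&: l| = (#|O :&: l| == 1) + 2 * (#|O :&: l| == 2).
  rewrite inE => /andP[OB _]; have := card_blockI_line_le2 OB.
  by case: #|O :&: l| => [|[|[|n]]].
rewrite (eq_bigr _ tangent_or_secant) big_split -card_tangent_blocks_through in meets.
by move: meets; rewrite -big_distrr /= => /(congr1 odd); rewrite oddD oddM addbF /= => ->.
Qed.

Lemma card_tangent_off O : O \in tan -> #|O :&: off| = q.
Proof.
rewrite inE => /andP[OB /eqP meet1].
rewrite setIDA (setIidPl (block_sub OB)); move: (cardsID l O).
by rewrite meet1 (card_block OB) add1n => -[].
Qed.

Lemma card_tangentsI_off O O' : O \in tan -> O' \in tan -> O != O' ->
  #|O' :&: (O :&: off)| = 1.
Proof.
move=> Otan O'tan neqOO'; have OB := subsetP tangent_blocks_sub O Otan.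
have O'B := subsetP tangent_blocks_sub O' O'tan.
have meet_off : O' :&: O \subset off.
  apply/subsetP => x; rewrite !inE => /andP[xO' xO].
  rewrite (subsetP (block_sub OB)) // andbT; apply/negP => x_l.
  have := card_tangents_through_line x_l.
  have : [set O; O'] \subset blocks_through tan x.
    by apply/subsetP => P; rewrite in_set2 => /orP[]/eqP->; rewrite in_set ?Otan ?O'tan.
  by move/subset_leq_card; rewrite cards2 neqOO' => /[swap] ->.
by rewrite setIA (setIidPl meet_off) setIC card_blockI.
Qed.

Lemma sum_card_tangents_off :
  \sum_(y in off) #|blocks_through tan y| = q.+1 * q.
Proof.
rewrite sum_card_blocks_through -card_tangent_blocks -sum_nat_const.
by apply: eq_bigr => O Otan; rewrite card_tangent_off.
Qed.

Lemma sum_sqr_card_tangents_off :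
  \sum_(y in off) #|blocks_through tan y| ^ 2 = q.+1 * q.*2.
Proof.
under eq_bigr do rewrite -mulnn.
rewrite sum_blocks_through_mul -card_tangent_blocks -sum_nat_const.
apply: eq_bigr => O Otan; rewrite sum_card_blocks_through (bigD1 O) //=.
rewrite setIA setIid card_tangent_off // -addnn; congr (_ + _).
rewrite (eq_bigr (fun=> 1)) => [|O' /andP[O'tan neqO'O]]; last first.
  by rewrite card_tangentsI_off // eq_sym.
rewrite sum1_card; move: card_tangent_blocks; rewrite (cardD1 O) Otan => -[<-].
by apply: eq_card => O'; rewrite -topredE /= !inE andbC.
Qed.

Lemma card_tangents_through_off_odd : odd q ->
  forall y, y \in off -> #|blocks_through tan y| \in [:: 0; 2].
Proof.
move=> odd_q; apply: sum_double_even.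
  by move=> y y_off; rewrite odd_card_tangents_through_off // odd_q.
by rewrite -big_distrr sum_card_tangents_off sum_sqr_card_tangents_off -mul2n mulnCA.
Qed.

Lemma card_off : #|off| = (q ^ 2)%N.
Proof. by rewrite cardsD (setIidPr line_sub) card_pts card_line; lia. Qed.

Section EvenOrder.
Hypothesis even_q : ~~ odd q.

Lemma card_tangents_through_off_gt0 y : y \in off -> 0 < #|blocks_through tan y|.
Proof. by move=> y_off; rewrite odd_gt0 // odd_card_tangents_through_off. Qed.

Lemma sum_pred_card_tangents_off : \sum_(y in off) #|blocks_through tan y|.-1 = q.
Proof.
have := sum_card_tangents_off.
under eq_bigr => y /card_tangents_through_off_gt0/prednK<- do rewrite -addn1.
by rewrite big_split /= sum1_card card_off; lia.
Qed.

Lemma sum_sqr_pred_card_tangents_off :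
  \sum_(y in off) #|blocks_through tan y|.-1 ^ 2 = (q ^ 2)%N.
Proof.
have := sum_sqr_card_tangents_off.
under eq_bigr => y /card_tangents_through_off_gt0/prednK<- do rewrite -addn1 sqrnD muln1.
rewrite !big_split -big_distrr /= sum_pred_card_tangents_off.
by rewrite sum1_card sum_nat_const card_off; lia.
Qed.

Lemma tangents_concurrent_even :
  exists2 y, y \in pts & forall O, O \in tan -> y \in O.
Proof.
have [y y_off ty_gt1] : exists2 y, y \in off & 0 < #|blocks_through tan y|.-1.
  apply/exists_inP; apply: contraTT q_gt0; rewrite negb_exists_in => /forall_inP t1.
  by rewrite -sum_pred_card_tangents_off big1 // => y /t1; rewrite lt0n negbK => /eqP.
have := sum_sqr_eq_sqr_sum (u := fun y => #|blocks_through tan y|.-1) _ y_off.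
rewrite sum_pred_card_tangents_off sum_sqr_pred_card_tangents_off => /(_ erefl).
rewrite !inE eqn0Ngt ty_gt1 /= => /eqP ty_q.
have tan_y : blocks_through tan y = tan.
  apply/eqP; rewrite eqEcard card_tangent_blocks -ty_q.
  rewrite prednK ?card_tangents_through_off_gt0 // leqnn andbT.
  by apply/subsetP => O; rewrite inE => /andP[].
exists y; first by move: y_off; rewrite inE => /andP[].
by move=> O; rewrite -tan_y inE => /andP[].
Qed.

End EvenOrder.

Theorem tangent_blocks_spec :
  [/\ #|tan| = q.+1,
      forall x, x \in l -> #|blocks_through tan x| = 1,
      ~~ odd q -> exists2 y, y \in pts & forall O, O \in tan -> y \in O &
      odd q -> forall y, y \in off -> #|blocks_through tan y| \in [:: 0; 2]].
Proof.
split; [exact: card_tangent_blocks | exact: card_tangents_through_line |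
        exact: tangents_concurrent_even | exact: card_tangents_through_off_odd].
Qed.

End TangentBlocks.

End BlockDesign.

Section PointCount.
Variable F : finFieldType.
Local Notation q := #|F|.

Definition points_of (A : 'M[F]_3) : {set 'M[F]_3} :=
  [set P in pg_points F | (P <= A)%MS].

Lemma genmx_rV_pg_point (v : 'rV[F]_3) : v != 0%R -> <<v>>%MS \in pg_points F.
Proof. by move=> nz_v; rewrite inE mxrank_gen rank_rV nz_v genmx_id eqxx. Qed.

Lemma genmx_rV_eq_pg_point (P : 'M[F]_3) (v : 'rV[F]_3) :
  P \in pg_points F -> v != 0%R -> (<<v>>%MS == P) = (v <= P)%MS.
Proof.
rewrite inE => /andP[/eqP rkP /eqP genP] nz_v; rewrite -{1}genP.
apply/eqP/idP => [/genmxP/andP[] //|vP]; apply/genmxP.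
by rewrite -(mxrank_leqif_eq vP).2 rank_rV nz_v rkP.
Qed.

Lemma card_nonzero_rows m n (A : 'M[F]_(m, n)) :
  #|[set v : 'rV_n | (v != 0%R) && (v <= A)%MS]| = (q ^ \rank A).-1.
Proof.
rewrite -card_rowg [#|rowg A|](cardsD1 0%R) mem_rowg sub0mx add1n /=.
by apply: eq_card => v; rewrite !inE.
Qed.

Lemma card_points_of (A : 'M[F]_3) : #|points_of A| = \sum_(i < \rank A) q ^ i.
Proof.
have q1_gt0 : 0 < q.-1 by rewrite -subn1 subn_gt0 card_finNzRing_gt1.
(* Each point of A contains exactly q - 1 of the nonzero vectors of A. *)
apply/eqP; rewrite -(eqn_pmul2l q1_gt0) -predn_exp -card_nonzero_rows; apply/eqP.
rewrite -(sum1dep_card (fun v : 'rV_3 => (v != 0%R) && (v <= A)%MS)).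
rewrite (partition_big (fun v => <<v>>%MS) (mem (points_of A))) /=.
  rewrite mulnC -sum_nat_const; apply: eq_bigr => P; rewrite inE => /andP[Ppt PA].
  have /[!inE]/andP[/eqP rkP _] := Ppt; have := card_nonzero_rows P.
  rewrite rkP expn1 => <-; rewrite -(sum1dep_card (fun v => (v != 0%R) && (v <= P)%MS)).
  apply: eq_bigl => v; have [-> //|nz_v] := eqVneq v 0%R.
  rewrite /= genmx_rV_eq_pg_point //; apply/idP/andP => [vP|[] //].
  by split=> //; exact: submx_trans vP PA.
by move=> v /andP[nz_v vA]; rewrite inE genmx_rV_pg_point //= genmxE.
Qed.

Lemma points_of_sub (A : 'M[F]_3) : points_of A \subset pg_points F.
Proof. by apply/subsetP => P; rewrite inE => /andP[]. Qed.

Lemma card_pg_points : #|pg_points F| = (q ^ 2 + q + 1)%N.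
Proof.
have -> : pg_points F = points_of 1%:M by apply/setP => P; rewrite [RHS]inE submx1 andbT.
by rewrite card_points_of mxrank1 !big_ord_recr big_ord0 /= expn0 expn1; lia.
Qed.

Lemma card_line_points (L : 'M[F]_3) : L \in pg_lines F -> #|points_of L| = q.+1.
Proof.
rewrite inE => /andP[/eqP rkL _].
by rewrite card_points_of rkL !big_ord_recr big_ord0 /= expn0 expn1 add1n.
Qed.

Lemma on_lineE (O : {set 'M[F]_3}) L :
  O \subset pg_points F -> on_line O L = O :&: points_of L.
Proof.
move/subsetP=> O_pts; apply/setP => P.
rewrite in_setI [P \in on_line _ _]in_set [P \in points_of _]in_set.
by case PO: (P \in O) => //=; rewrite O_pts ?PO.
Qed.

Lemma tangent_ovalsE (G : {set {set 'M[F]_3}}) L :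
  (forall O, O \in G -> O \subset pg_points F) ->
  tangent_ovals G L = tangent_blocks G (points_of L).
Proof.
move=> G_pts; apply/setP => O; rewrite !inE.
by case OG: (O \in G); rewrite //= /tangent on_lineE ?G_pts.
Qed.

End PointCount.

Theorem lemma4p6 (F : finFieldType) (G : {set {set 'M[F]_3}}) :
  is_projective_bundle G ->
  forall L, L \in pg_lines F ->
    [/\ #|tangent_ovals G L| = #|F|.+1,
        (forall P, P \in pg_points F -> (P <= L)%MS ->
           #|[set O in tangent_ovals G L | P \in O]| = 1%N),
        (~~ odd #|F| ->
           exists2 P, P \in pg_points F & forall O, O \in tangent_ovals G L -> P \in O) &
        (odd #|F| ->
           forall P, P \in pg_points F -> ~~ (P <= L)%MS ->
             #|[set O in tangent_ovals G L | P \in O]| \in [:: 0%N; 2%N])].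
Proof.
move=> /and3P[/forall_inP ovals /eqP card_G /forall_inP meet1] L L_line.
have oval_pts O : O \in G -> O \subset pg_points F by move/ovals/and3P=> [].
have card_oval O : O \in G -> #|O| = #|F|.+1 by move/ovals/and3P=> [_ /eqP].
have card_ovalI O O' : O \in G -> O' \in G -> O != O' -> #|O :&: O'| = 1.
  move=> OG O'G neqOO'.
  by move/forall_inP/(_ O' O'G)/implyP/(_ neqOO')/eqP: (meet1 O OG).
have card_oval_line O : O \in G -> #|O :&: points_of L| <= 2.
  move=> OG; rewrite -on_lineE ?oval_pts //.
  by move/ovals/and3P: OG => [_ _ /forall_inP]; apply.
have [] := tangent_blocks_spec (ltnW (card_finNzRing_gt1 F)) (card_pg_points F) card_G
  oval_pts card_oval card_ovalI (points_of_sub L) (card_line_points L_line) card_oval_line.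
rewrite -tangent_ovalsE // => card_tan tan_line tan_even tan_odd; split=> //.
  by move=> P Ppt PL; apply: tan_line; rewrite [_ \in points_of _]inE Ppt.
move=> odd_q P Ppt nPL; apply: tan_odd => //.
by rewrite in_setD [_ \in points_of _]inE Ppt nPL.
Qed.
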